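(* \[\inf_{F\in\Delta_{L^1}(\mathbb{R}_+)}\ \sup_{p\in\mathbb{R}_+}\frac{\mathsf{W}(p,F)}{\mathsf{OPT\text{-}W}(F)}\ \ge\ \frac{2+\sqrt2}{4}.\]
   Context: Symmetric bilateral trade: $B,S$ i.i.d. with distribution $F$; posting price $p$, trade iff $B>p\ge S$. $\mathsf{W}(p,F)=\mathbb{E}[S]+\mathbb{E}[(B-S)\mathbf 1_{B>p\ge S}]$, $\mathsf{OPT\text{-}W}(F)=\mathbb{E}[\max\{B,S\}]$. $\Delta_{L^1}(\mathbb{R}_+)$ denotes probability distributions on $[0,\infty)$ with finite, nonzero mean. *)

From HB Require Import structures.
From mathcomp Require Import all_boot all_order all_algebra.
From mathcomp Require Import all_classical all_reals all_analysis.
Set Implicit Arguments. Unset Strict Implicit. Unset Printing Implicit Defensive.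
Import Order.TTheory GRing.Theory Num.Theory.
Local Open Scope classical_set_scope.
Local Open Scope ring_scope.

(* F is a probability distribution on the real line (Borel sets);
   B, S are i.i.d. with law F, so (B,S) has law F \x F. *)

Definition welfare (R : realType) (F : probability R R) (p : R) : \bar R :=
  ((\int[F]_x x%:E) +
   \int[F \x F]_z (if (p < z.1) && (z.2 <= p) then z.1 - z.2 else 0)%:E)%E.

Definition opt_welfare (R : realType) (F : probability R R) : \bar R :=
  (\int[F \x F]_z (Num.max z.1 z.2)%:E)%E.

Definition in_DeltaL1 (R : realType) (F : probability R R) : Prop :=
  F `[0%R, +oo[%classic = 1%E /\
  F.-integrable setT (fun x => x%:E) /\
  (\int[F]_x x%:E)%E <> 0%E.

Definition best_ratio (R : realType) (F : probability R R) : \bar R :=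
  ereal_sup [set (fine (welfare F p) / fine (opt_welfare F))%:E
            | p in `[0%R, +oo[%classic].

From HB Require Import structures.
From mathcomp Require Import all_boot all_order all_algebra.
From mathcomp Require Import all_classical all_reals all_analysis.
From mathcomp Require Import measurable_realfun ring lra.
Set Implicit Arguments. Unset Strict Implicit. Unset Printing Implicit Defensive.
Import Order.TTheory GRing.Theory Num.Theory.
Local Open Scope classical_set_scope.
Local Open Scope ring_scope.

(* Let G be the distribution function of F and c = (2 + sqrt 2) / 4. By the layer-cake
   formula E[S] = int_0^oo (1 - G), E[max(B,S)] = int_0^oo (1 - G^2), and the gain from
   trade at price p is int (1 - G(max t p)) G(min t p) dt. If G(p) = sqrt 2 / 2, the
   integrand of W(p,F) is 1 - G(t) sqrt 2 / 2 below p and (1 - G(t)) (1 + sqrt 2 / 2)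
   above p, and both dominate c (1 - G(t)^2). As G may jump over sqrt 2 / 2, we mix two
   prices at distance at most d whose mixed quantile is sqrt 2 / 2, losing at most d on
   the interval between them; the better of the two prices does at least as well as the
   mixture, and d can be taken arbitrarily small relative to E[max(B,S)]. *)

Lemma lebesgue_measure_itv_co (R : realType) (x y : R) :
  lebesgue_measure `[x, y[%classic = (Num.max (y - x) 0)%:E.
Proof.
rewrite lebesgue_measure_itv /= lte_fin.
have [xy|yx] := ltP x y; first by rewrite max_l ?subr_ge0 ?ltW // EFinB.
by rewrite max_r // subr_le0.
Qed.

Lemma indic_ge0 (T : Type) (R : numDomainType) (A : set T) (x : T) : 0 <= \1_A x :> R.
Proof. by rewrite indicE ler0n. Qed.

Section measurable_comparison_sets.
Context d (T : measurableType d) (R : realType).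

Lemma measurable_set_ler (u v : T -> R) :
  measurable_fun setT u -> measurable_fun setT v -> measurable [set z | u z <= v z].
Proof. by move=> mfu mfv; rewrite -[X in measurable X]setTI; exact: measurable_fun_le. Qed.

Lemma measurable_set_ltr (u v : T -> R) :
  measurable_fun setT u -> measurable_fun setT v -> measurable [set z | u z < v z].
Proof.
move=> mfu mfv; rewrite (_ : [set z | _] = ~` [set z | v z <= u z]).
  exact/measurableC/measurable_set_ler.
by apply/seteqP; split=> z /=; rewrite ltNge => /negP.
Qed.

End measurable_comparison_sets.

Section layer_cake.
Context d (T : measurableType d) (R : realType).
Variable mu : {sigma_finite_measure set T -> \bar R}.
Local Notation leb := (@lebesgue_measure R).

Lemma layer_cake_indic_diff (A : set T) (u v : T -> R) : measurable A ->
  measurable_fun setT u -> measurable_fun setT v ->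
  (\int[mu]_z (\1_A z * Num.max (v z - u z) 0)%:E =
   \int[leb]_t mu (A `&` [set z | (u z <= t < v z)%R]))%E.
Proof.
move=> mA mfu mfv.
pose S : set (T * measurableTypeR R) := [set w | A w.1 /\ u w.1 <= w.2 < v w.1].
have mS : measurable S.
  rewrite (_ : S = (A `*` setT) `&` [set w | u w.1 <= w.2] `&` [set w | w.2 < v w.1]).
    apply: measurableI; first apply: measurableI.
    - exact: measurableX.
    - by apply: measurable_set_ler; [exact: measurableT_comp | exact: measurable_snd].
    - by apply: measurable_set_ltr; [exact: measurable_snd | exact: measurableT_comp].
  by apply/seteqP; split=> w /=; [case=> ? /andP[]|case=> -[[? _] ? ?]; split=> //; apply/andP].
have := indic_fubini_tonelli mu leb mS.
rewrite indic_fubini_tonelli_FE // indic_fubini_tonelli_GE // => fubini.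
transitivity (\int[mu]_x leb (xsection S x))%E.
  apply: eq_integral => x _; rewrite indicE.
  have [xA|xA] := boolP (x \in A).
    rewrite mul1r -lebesgue_measure_itv_co; congr leb; apply/seteqP.
    split=> y; rewrite /xsection /S /= in_itv /= inE /=; last by case.
    by split=> //; exact: set_mem.
  rewrite mul0r (_ : xsection S x = set0) ?measure0 //; apply/seteqP; split=> y //.
  by rewrite /xsection /S /= inE /= => -[/mem_set]; rewrite (negbTE xA).
apply: (eq_trans fubini); apply: eq_integral => t _ /=.
by congr (mu _); apply/seteqP; split=> z; rewrite /ysection /S /= inE.
Qed.

Lemma layer_cake_ae_ge0 (v : T -> R) : measurable_fun setT v ->
  mu [set z | v z < 0] = 0%E ->
  (\int[mu]_z (v z)%:E = \int[leb]_t mu [set z | (0 <= t < v z)%R])%E.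
Proof.
move=> mv v0.
transitivity (\int[mu]_z (\1_setT z * Num.max (v z - 0) 0)%:E)%E.
  apply: ae_eq_integral => //.
  - exact/measurable_EFinP.
  - apply/measurable_EFinP; apply: measurable_funM => //.
    by apply: measurable_maxr => //; exact: measurable_funB.
  exists [set z | v z < 0]; split => //; first exact: measurable_set_ltr.
  move=> z /= neq; rewrite ltNge; apply: contra_notN neq => vz0 _.
  by rewrite indicE mem_set // mul1r subr0 max_l.
rewrite (layer_cake_indic_diff measurableT (measurable_cst (0 : R))) //.
by apply: eq_integral => t _; rewrite setTI.
Qed.

End layer_cake.

Section ge0_real_integrals.
Context d (T : measurableType d) (R : realType).
Variable mu : {measure set T -> \bar R}.
Implicit Types f g : T -> R.

Lemma ge0_integralD_EFin f g : measurable_fun setT f -> measurable_fun setT g ->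
  (forall t, 0 <= f t) -> (forall t, 0 <= g t) ->
  (\int[mu]_t (f t + g t)%:E = \int[mu]_t (f t)%:E + \int[mu]_t (g t)%:E)%E.
Proof.
move=> mf mg f0 g0; under eq_integral do rewrite EFinD.
by apply: ge0_integralD => // [t _| |t _|]; rewrite ?lee_fin //; exact/measurable_EFinP.
Qed.

Lemma ge0_integralZl_real (k : R) f : 0 <= k -> measurable_fun setT f ->
  (forall t, 0 <= f t) -> (\int[mu]_t (k * f t)%:E = k%:E * \int[mu]_t (f t)%:E)%E.
Proof.
move=> k0 mf f0; under eq_integral do rewrite EFinM.
by apply: ge0_integralZl_EFin => // [t _|]; rewrite ?lee_fin //; exact/measurable_EFinP.
Qed.

End ge0_real_integrals.

Section sqrt2_bounds.
Variable R : rcfType.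
Local Notation s := (Num.sqrt (2 : R)).

Let s_ge0 : 0 <= s. Proof. exact: sqrtr_ge0. Qed.
Let s_sqr : s ^+ 2 = 2. Proof. by rewrite sqr_sqrtr. Qed.

Lemma sqrt2_lt2 : s < 2.
Proof. by have := s_sqr; have := s_ge0; rewrite expr2; nra. Qed.

Lemma sqrt2_bound_below (g : R) : 0 <= g <= 1 ->
  (2 + s) / 4 * (1 - g ^+ 2) <= 1 - s / 2 * g.
Proof.
move=> /andP[g0 g1]; have := sqr_ge0 ((2 + s) * g - s).
by have := s_sqr; have := s_ge0; nra.
Qed.

Lemma sqrt2_bound_between (g : R) : 0 <= g <= 1 -> (2 + s) / 4 * (1 - g ^+ 2) <= 1.
Proof. by move=> /andP[g0 g1]; have := sqrt2_lt2; have := s_ge0; nra. Qed.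

Lemma sqrt2_bound_above (g q : R) : 0 <= g <= 1 -> s / 2 <= q ->
  (2 + s) / 4 * (1 - g ^+ 2) <= (1 - g) * (1 + q).
Proof.
move=> /andP[g0 g1] sq; have s0 := s_ge0.
have : 0 <= (1 - g) * (q - s / 2 + (1 - g) * (2 + s) / 4) by apply: mulr_ge0; nra.
nra.
Qed.

End sqrt2_bounds.

Section bilateral_trade.
Variables (R : realType) (F : probability R R).
Local Notation leb := (@lebesgue_measure R).
Local Notation s := (Num.sqrt (2 : R)).

Let idR : R -> R := idfun.
#[local] HB.instance Definition _ :=
  @isMeasurableFun.Build _ _ _ _ idR (@measurable_id _ _ setT).

Definition cdfr (t : R) : R := fine (cdf (idR : {RV F >-> R}) t).

Lemma cdfrE t : F `]-oo, t]%classic = (cdfr t)%:E.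
Proof. by rewrite /cdfr fineK ?fin_num_measure. Qed.

Lemma cdfr_ge0 t : 0 <= cdfr t.
Proof. by rewrite -lee_fin -cdfrE. Qed.

Lemma cdfr_le1 t : cdfr t <= 1.
Proof. by rewrite -lee_fin -cdfrE probability_le1. Qed.

Lemma cdfr_nondecreasing : {homo cdfr : x y / x <= y}.
Proof. by move=> x y xy; rewrite fine_le ?fin_num_measure // cdf_nondecreasing. Qed.

Lemma measurable_cdfr : measurable_fun setT cdfr.
Proof. exact: nondecreasing_measurable cdfr_nondecreasing. Qed.

Lemma probability_itvoy t : F `]t, +oo[%classic = (1 - cdfr t)%:E.
Proof. by rewrite -setCitvl probability_setC // cdfrE. Qed.

Lemma cdfr_large (y e : R) : y < 1 -> 0 < e -> exists n : nat, y <= cdfr (n%:R * e).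
Proof.
move=> y1 e0.
have /fine_cvgP[_ cdfr1] := cvg_cdfy1 (idR : {RV F >-> R}).
have [M [_ HM]] := cvgr_gt _ cdfr1 _ y1.
exists (Num.truncn (M / e)).+1; apply/ltW/HM.
by rewrite -ltr_pdivrMr // truncnS_gt.
Qed.

Local Notation mix lam p1 p2 := (lam * cdfr p1 + (1 - lam) * cdfr p2).

Lemma exists_mixed_prices (e : R) : 0 < e -> exists p1 p2 lam : R,
  [/\ 0 <= p1, p1 <= p2, p2 - p1 <= e, 0 <= lam <= 1 &
      s / 2 <= mix lam p1 p2 /\ (0 < p1 -> mix lam p1 p2 <= s / 2)].
Proof.
move=> e0; have := @sqrt2_lt2 R; have := @sqrtr_ge0 R 2 => s0 s_lt2.
have [cdfr0|cdfr0] := leP (s / 2) (cdfr 0).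
  exists 0, 0, 1; rewrite mul1r !subrr mul0r addr0 ltxx.
  by split=> //; [exact: ltW | rewrite ler01 lexx].
have [n cdfrn] := cdfr_large (ltac:(lra) : s / 2 < 1) e0.
have ex_n : exists n : nat, s / 2 <= cdfr (n%:R * e) by exists n.
case: (ex_minnP ex_n) => -[|k] cdfrk kmin.
  by move: cdfrk; rewrite mul0r leNgt cdfr0.
have cdfrk' : cdfr (k%:R * e) < s / 2.
  by rewrite ltNge; apply/negP => /kmin; rewrite ltnn.
set q1 := cdfr (k%:R * e) in cdfrk' *; set q2 := cdfr (k.+1%:R * e) in cdfrk.
exists (k%:R * e), (k.+1%:R * e), ((q2 - s / 2) / (q2 - q1)).
have dq : 0 < q2 - q1 by lra.
split.
- by rewrite mulr_ge0 // ltW.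
- by rewrite ler_pM2r // ler_nat.
- by rewrite -mulrBl -natrB // subSnn mul1r.
- by rewrite divr_ge0 ?ler_pdivrMr //=; lra.
- have -> : (q2 - s / 2) / (q2 - q1) * q1 + (1 - (q2 - s / 2) / (q2 - q1)) * q2 = s / 2.
    by field; exact: lt0r_neq0.
  by split.
Qed.

Hypothesis supp : F `[0%R, +oo[%classic = 1%E.

Lemma probability_lt0 : F [set x | x < 0] = 0%E.
Proof.
have := probability_setC F (measurable_itv `[0%R, +oo[).
by rewrite supp subee // setCitvr set_itvE.
Qed.

Lemma cdfr_lt0 t : t < 0 -> cdfr t = 0.
Proof.
move=> t0; apply/eqP; rewrite eq_le cdfr_ge0 andbT -lee_fin -cdfrE.
apply: (@le_trans _ _ (F [set x | x < 0])); last by rewrite probability_lt0.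
apply: le_measure; rewrite ?inE //=; first by rewrite -set_itvE.
by move=> x /=; rewrite in_itv /= => /le_lt_trans; apply.
Qed.

Definition mean_tail t : R := \1_(`[0%R, +oo[%classic) t * (1 - cdfr t).
Definition trade_tail p t : R := (1 - cdfr (Num.max t p)) * cdfr (Num.min t p).
Definition max_tail t : R := \1_(`[0%R, +oo[%classic) t * (1 - cdfr t ^+ 2).

Lemma integral_mean_tail : (\int[F]_x x%:E = \int[leb]_t (mean_tail t)%:E)%E.
Proof.
rewrite (layer_cake_ae_ge0 (@measurable_id _ _ setT) probability_lt0).
apply: eq_integral => t _; rewrite /mean_tail indicE.
have [t0|t0] := leP 0 t.
  rewrite mem_set /=; last by rewrite in_itv /= t0.
  rewrite mul1r -probability_itvoy; congr (F _).
  by apply/seteqP; split=> x; rewrite /= in_itv /= andbT.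
rewrite memNset ?mul0r /=; last by rewrite in_itv /= leNgt t0.
by rewrite (_ : [set _ | _] = set0) ?measure0 //; apply/seteqP; split=> x.
Qed.

Local Notation FF := (F \x F)%E.

Lemma integral_trade_tail p :
  (\int[FF]_z (if (p < z.1) && (z.2 <= p) then z.1 - z.2 else 0)%:E =
   \int[leb]_t (trade_tail p t)%:E)%E.
Proof.
pose A : set (R * R) := [set z | p < z.1] `&` [set z | z.2 <= p].
have mA : measurable A.
  apply: measurableI; first by apply: measurable_set_ltr => //; exact: measurable_fst.
  by apply: measurable_set_ler => //; exact: measurable_snd.
transitivity (\int[FF]_z (\1_A z * Num.max (z.1 - z.2) 0)%:E)%E.
  apply: eq_integral => z _; rewrite indicE; case: ifPn => [/andP[pz1 z2p]|nA].
    by rewrite mem_set // mul1r max_l // subr_ge0 ltW // (le_lt_trans z2p).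
  by rewrite memNset ?mul0r // => -[? ?]; move: nA; rewrite negb_and => /orP[] /negP.
pose P2 : probability _ R := FF.
rewrite (layer_cake_indic_diff P2 mA measurable_snd measurable_fst).
apply: eq_integral => t _.
rewrite (_ : _ `&` _ = `](Num.max t p), +oo[%classic `*` `]-oo, (Num.min t p)]%classic).
  rewrite /P2 /= product_measure1E // /trade_tail EFinM.
  by congr (_ * _)%E; [exact: probability_itvoy | exact: cdfrE].
apply/seteqP; split=> z /=.
  move=> [[pz1 z2p] /andP[tz2 z1t]]; rewrite !in_itv /= andbT gt_max le_min.
  by rewrite pz1 z1t z2p tz2.
rewrite !in_itv /= andbT gt_max le_min => -[/andP[tz1 pz1] /andP[z2t z2p]].
by split => //; apply/andP.
Qed.

Lemma integral_max_tail :
  (\int[FF]_z (Num.max z.1 z.2)%:E = \int[leb]_t (max_tail t)%:E)%E.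
Proof.
pose P2 : probability _ R := FF.
have mmax : measurable_fun setT (fun z : R * R => Num.max z.1 z.2).
  by apply: measurable_maxr; [exact: measurable_fst | exact: measurable_snd].
rewrite (layer_cake_ae_ge0 (mu := P2) mmax); last first.
  apply: (@subset_measure0 _ _ _ P2 _ ([set x | x < 0] `*` setT)) => //.
  - by apply: measurable_set_ltr => //; exact: measurable_cst.
  - by apply: measurableX => //; rewrite -set_itvE.
  - by move=> z /=; rewrite gt_max => /andP[].
  rewrite /P2 /= product_measure1E //; last by rewrite -set_itvE.
  by apply: (@eq_trans _ _ (0 * F setT)%E); [congr (_ * _)%E; exact: probability_lt0 | exact: mul0e].
apply: eq_integral => t _; rewrite /max_tail indicE.
have [t0|t0] := leP 0 t; last first.
  rewrite memNset ?mul0r /=; last by rewrite in_itv /= leNgt t0.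
  by rewrite (_ : [set _ | _] = set0) ?measure0 //; apply/seteqP; split=> z.
rewrite mem_set /=; last by rewrite in_itv /= t0.
rewrite (_ : [set _ | _] = ~` (`]-oo, t]%classic `*` `]-oo, t]%classic)).
  rewrite probability_setC; last exact: measurableX.
  rewrite /P2 /= product_measure1E // mul1r expr2 EFinB EFinM.
  by congr (_ - _ * _)%E; exact: cdfrE.
apply/seteqP; split=> z /=; rewrite !in_itv /= lt_max !ltNge -negb_and.
  by move=> /negP nzt [z1t z2t]; apply: nzt; rewrite z1t z2t.
by move=> nzt; apply/negP => /andP.
Qed.

Lemma mean_tail_ge0 t : 0 <= mean_tail t.
Proof. by rewrite mulr_ge0 ?indic_ge0 // subr_ge0 cdfr_le1. Qed.

Lemma trade_tail_ge0 p t : 0 <= trade_tail p t.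
Proof. by rewrite mulr_ge0 ?cdfr_ge0 // subr_ge0 cdfr_le1. Qed.

Lemma trade_tail_lt p t : t < p -> trade_tail p t = (1 - cdfr p) * cdfr t.
Proof. by move=> /ltW tp; rewrite /trade_tail max_r ?min_l. Qed.

Lemma trade_tail_ge p t : p <= t -> trade_tail p t = (1 - cdfr t) * cdfr p.
Proof. by move=> pt; rewrite /trade_tail max_l ?min_r. Qed.

Lemma trade_tail_le_mean_tail p t : 0 <= p -> trade_tail p t <= mean_tail t.
Proof.
move=> p0; have [t0|t0] := ltP t 0.
  by rewrite trade_tail_lt ?(lt_le_trans t0 p0) // (cdfr_lt0 t0) mulr0 mean_tail_ge0.
rewrite /mean_tail indicE mem_set ?mul1r; last by rewrite /= in_itv /= t0.
apply: (@le_trans _ _ (1 - cdfr (Num.max t p))).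
  by rewrite ler_piMr ?cdfr_le1 // subr_ge0 cdfr_le1.
by rewrite lerB // cdfr_nondecreasing // le_max lexx.
Qed.

Lemma mean_tail_le_max_tail t : mean_tail t <= max_tail t.
Proof.
rewrite ler_wpM2l ?indic_ge0 //.
by have := cdfr_ge0 t; have := cdfr_le1 t; nra.
Qed.

Lemma max_tail_ge0 t : 0 <= max_tail t.
Proof. exact: le_trans (mean_tail_ge0 t) (mean_tail_le_max_tail t). Qed.

Lemma max_tail_le2_mean_tail t : max_tail t <= 2 * mean_tail t.
Proof.
rewrite /max_tail /mean_tail mulrCA ler_wpM2l ?indic_ge0 //.
by have := cdfr_ge0 t; have := cdfr_le1 t; nra.
Qed.

Lemma max_tail_le_mix (p1 p2 lam t : R) : 0 <= p1 -> p1 <= p2 -> 0 <= lam <= 1 ->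
  s / 2 <= mix lam p1 p2 -> (0 < p1 -> mix lam p1 p2 <= s / 2) ->
  (2 + s) / 4 * max_tail t <= mean_tail t + lam * trade_tail p1 t +
    (1 - lam) * trade_tail p2 t + \1_(`[p1, p2[%classic) t.
Proof.
move=> p10 p12 /andP[lam0 lam1] q_ge q_le.
have tr1 : 0 <= lam * trade_tail p1 t by rewrite mulr_ge0 ?trade_tail_ge0.
have tr2 : 0 <= (1 - lam) * trade_tail p2 t by rewrite mulr_ge0 ?subr_ge0 ?trade_tail_ge0.
have ind := indic_ge0 R `[p1, p2[%classic t; have mt := mean_tail_ge0 t.
have [t0|t0] := ltP t 0.
  rewrite /max_tail indicE memNset ?mul0r ?mulr0 /=; last by rewrite in_itv /= leNgt t0.
  lra.
have g01 : 0 <= cdfr t <= 1 by rewrite cdfr_ge0 cdfr_le1.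
rewrite /max_tail /mean_tail indicE mem_set ?mul1r; last by rewrite /= in_itv /= t0.
have [tp1|p1t] := ltP t p1.
  rewrite (trade_tail_lt tp1) (trade_tail_lt (lt_le_trans tp1 p12)).
  have q : mix lam p1 p2 = s / 2 by apply/le_anti; rewrite q_ge q_le // (le_lt_trans t0 tp1).
  have : lam * ((1 - cdfr p1) * cdfr t) + (1 - lam) * ((1 - cdfr p2) * cdfr t) =
         cdfr t - s / 2 * cdfr t by rewrite -q; ring.
  by have := sqrt2_bound_below g01; lra.
have [tp2|p2t] := ltP t p2.
  rewrite indicE mem_set /=; last by rewrite in_itv /= p1t tp2.
  by have := cdfr_le1 t; have := sqrt2_bound_between g01; lra.
rewrite (trade_tail_ge (le_trans p12 p2t)) (trade_tail_ge p2t).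
have : lam * ((1 - cdfr t) * cdfr p1) + (1 - lam) * ((1 - cdfr t) * cdfr p2) =
       (1 - cdfr t) * (1 + mix lam p1 p2) - (1 - cdfr t) by ring.
by have := sqrt2_bound_above g01 q_ge; lra.
Qed.

Lemma measurable_mean_tail : measurable_fun setT mean_tail.
Proof.
apply: measurable_funM; first exact: measurable_indic.
by apply: measurable_funB => //; exact: measurable_cdfr.
Qed.

Lemma measurable_max_tail : measurable_fun setT max_tail.
Proof.
apply: measurable_funM; first exact: measurable_indic.
by apply: measurable_funB => //; apply: measurable_funX; exact: measurable_cdfr.
Qed.

Lemma measurable_trade_tail p : measurable_fun setT (trade_tail p).
Proof.
apply: measurable_funM.
  apply: measurable_funB => //; apply: nondecreasing_measurable => // x y xy.
  by rewrite cdfr_nondecreasing // ge_max !le_max xy lexx orbT.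
apply: nondecreasing_measurable => // x y xy.
by rewrite cdfr_nondecreasing // le_min !ge_min xy lexx orbT.
Qed.

Hypothesis integrable_id : F.-integrable setT (fun x => x%:E).
Hypothesis mean_neq0 : (\int[F]_x x%:E)%E <> 0%E.

Local Notation Imean := (\int[leb]_t (mean_tail t)%:E)%E.
Local Notation Itrade p := (\int[leb]_t (trade_tail p t)%:E)%E.
Local Notation Imax := (\int[leb]_t (max_tail t)%:E)%E.

Lemma Imean_fin_num : Imean \is a fin_num.
Proof. by rewrite -integral_mean_tail; exact: integrable_fin_num. Qed.

Lemma Imean_gt0 : 0 < fine Imean.
Proof.
rewrite -lte_fin fineK ?Imean_fin_num // lt0e integral_ge0 ?andbT => [|t _].
  by rewrite -integral_mean_tail; exact/eqP.
by rewrite lee_fin mean_tail_ge0.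
Qed.

Lemma Itrade_fin_num p : 0 <= p -> Itrade p \is a fin_num.
Proof.
move=> p0; rewrite ge0_fin_numE ?integral_ge0 // => [|t _]; last by rewrite lee_fin trade_tail_ge0.
apply: le_lt_trans (_ : _ <= Imean)%E _; last by rewrite ltey_eq Imean_fin_num.
apply: ge0_le_integral => //.
- by move=> t _; rewrite lee_fin trade_tail_ge0.
- by apply/measurable_EFinP; exact: measurable_trade_tail.
- by apply/measurable_EFinP; exact: measurable_mean_tail.
- by move=> t _; rewrite lee_fin trade_tail_le_mean_tail.
Qed.

Lemma Imax_fin_num : Imax \is a fin_num.
Proof.
rewrite ge0_fin_numE ?integral_ge0 // => [|t _]; last by rewrite lee_fin max_tail_ge0.
apply: le_lt_trans (_ : _ <= \int[leb]_t (2 * mean_tail t)%:E)%E _.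
  apply: ge0_le_integral => //.
  - by move=> t _; rewrite lee_fin max_tail_ge0.
  - by apply/measurable_EFinP; exact: measurable_max_tail.
  - by apply/measurable_EFinP; apply: measurable_funM => //; exact: measurable_mean_tail.
  - by move=> t _; rewrite lee_fin max_tail_le2_mean_tail.
rewrite ge0_integralZl_real //; [|exact: measurable_mean_tail|exact: mean_tail_ge0].
by rewrite -(fineK Imean_fin_num) -EFinM ltry.
Qed.

Lemma Imax_gt0 : 0 < fine Imax.
Proof.
apply: lt_le_trans Imean_gt0 _; rewrite fine_le ?Imean_fin_num ?Imax_fin_num //.
apply: ge0_le_integral => //.
- by move=> t _; rewrite lee_fin mean_tail_ge0.
- by apply/measurable_EFinP; exact: measurable_mean_tail.
- by apply/measurable_EFinP; exact: measurable_max_tail.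
- by move=> t _; rewrite lee_fin mean_tail_le_max_tail.
Qed.

Lemma integral_mix_tail (p1 p2 lam : R) : p1 <= p2 -> 0 <= lam <= 1 ->
  (\int[leb]_t (mean_tail t + lam * trade_tail p1 t + (1 - lam) * trade_tail p2 t +
                \1_(`[p1, p2[%classic) t)%:E =
   Imean + lam%:E * Itrade p1 + (1 - lam)%:E * Itrade p2 + (p2 - p1)%:E)%E.
Proof.
move=> p12 /andP[lam0 lam1]; have lam1' : 0 <= 1 - lam by rewrite subr_ge0.
have [ma a0] := (measurable_mean_tail, mean_tail_ge0).
have [mb1 mb2] := (measurable_trade_tail p1, measurable_trade_tail p2).
have [b10 b20] := (trade_tail_ge0 p1, trade_tail_ge0 p2).
have mf1 : measurable_fun setT (fun t => lam * trade_tail p1 t) by exact: measurable_funM.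
have mf2 : measurable_fun setT (fun t => (1 - lam) * trade_tail p2 t) by exact: measurable_funM.
have ma1 : measurable_fun setT (fun t => mean_tail t + lam * trade_tail p1 t).
  exact: measurable_funD.
have ma12 : measurable_fun setT
    (fun t => mean_tail t + lam * trade_tail p1 t + (1 - lam) * trade_tail p2 t).
  exact: measurable_funD.
have f1 t := mulr_ge0 lam0 (b10 t); have f2 t := mulr_ge0 lam1' (b20 t).
have a1 t := addr_ge0 (a0 t) (f1 t); have a12 t := addr_ge0 (a1 t) (f2 t).
have mind : measurable_fun setT (\1_(`[p1, p2[%classic) : R -> R) by exact: measurable_indic.
have ind0 t : 0 <= \1_(`[p1, p2[%classic) t :> R by exact: indic_ge0.
rewrite !ge0_integralD_EFin //.
rewrite !ge0_integralZl_real // integral_indic // setIT; congr (_ + _)%E.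
by apply: (eq_trans (lebesgue_measure_itv_co _ _)); rewrite max_l ?subr_ge0.
Qed.

Lemma integral_max_tail_le_mix (p1 p2 lam : R) :
  0 <= p1 -> p1 <= p2 -> 0 <= lam <= 1 ->
  s / 2 <= mix lam p1 p2 -> (0 < p1 -> mix lam p1 p2 <= s / 2) ->
  (2 + s) / 4 * fine Imax <=
  fine Imean + lam * fine (Itrade p1) + (1 - lam) * fine (Itrade p2) + (p2 - p1).
Proof.
move=> p10 p12 lam01 q_ge q_le; have /andP[lam0 lam1] := lam01.
have k0 : 0 <= (2 + s) / 4 by rewrite divr_ge0 ?addr_ge0 ?sqrtr_ge0.
have : (((2 + s) / 4)%:E * Imax <=
        Imean + lam%:E * Itrade p1 + (1 - lam)%:E * Itrade p2 + (p2 - p1)%:E)%E.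
  rewrite -integral_mix_tail // -ge0_integralZl_real //; last 2 first.
  - exact: measurable_max_tail.
  - exact: max_tail_ge0.
  apply: ge0_le_integral => //.
  - by move=> t _; rewrite lee_fin mulr_ge0 ?max_tail_ge0.
  - by apply/measurable_EFinP; apply: measurable_funM => //; exact: measurable_max_tail.
  - apply/measurable_EFinP; repeat apply: measurable_funD.
    + exact: measurable_mean_tail.
    + by apply: measurable_funM => //; exact: measurable_trade_tail.
    + by apply: measurable_funM => //; exact: measurable_trade_tail.
    + exact: measurable_indic.
  - by move=> t _; rewrite lee_fin max_tail_le_mix.
rewrite -lee_fin !EFinD !EFinM !fineK ?Imax_fin_num ?Imean_fin_num ?Itrade_fin_num //.
exact: le_trans p10 p12.
Qed.

Lemma exists_good_price (e : R) : 0 < e -> exists2 p, 0 <= p &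
  (2 + s) / 4 * fine Imax <= fine Imean + fine (Itrade p) + e.
Proof.
move=> e0.
have [p1 [p2 [lam [p10 p12 dp lam01 [q_ge q_le]]]]] := exists_mixed_prices e0.
have := integral_max_tail_le_mix p10 p12 lam01 q_ge q_le.
have /andP[lam0 lam1] := lam01.
have [le21|le12] := leP (fine (Itrade p2)) (fine (Itrade p1)).
  by exists p1 => //; nra.
by exists p2; [exact: le_trans p12 | nra].
Qed.

Lemma best_ratio_ge : (((2 + s) / 4)%:E <= best_ratio F)%E.
Proof.
apply/lee_addgt0Pr => e e0.
have [p p0 good] := exists_good_price (mulr_gt0 e0 Imax_gt0).
rewrite /best_ratio (_ : fine (opt_welfare F) = fine Imax); last first.
  by rewrite /opt_welfare integral_max_tail.
have Wp : fine (welfare F p) = fine Imean + fine (Itrade p).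
  by rewrite /welfare integral_mean_tail integral_trade_tail fineD ?Imean_fin_num ?Itrade_fin_num.
apply: le_trans (_ : _ <= (fine (welfare F p) / fine Imax)%:E + e%:E)%E _.
  rewrite -EFinD lee_fin.
  suff : (2 + s) / 4 - e <= fine (welfare F p) / fine Imax by lra.
  by rewrite ler_pdivlMr ?Imax_gt0 // mulrBl Wp; lra.
apply: leeD2r; apply: ereal_sup_ubound; exists p => //.
by rewrite /= in_itv /= p0.
Qed.

End bilateral_trade.

Theorem lemma7 (R : realType) (F : probability R R) :
  in_DeltaL1 F ->
  (((2 + Num.sqrt 2) / 4)%:E <= best_ratio F)%E.
Proof. by move=> [supp [integrable_id mean_neq0]]; exact: best_ratio_ge supp integrable_id mean_neq0. Qed.
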